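(* Let $p,d\ge1$ and $0\le r\le p$. For a $d$-tuple $\delta=(\sigma_1,\dots,\sigma_d)\in\mathbb P_p^d$ let $r(\delta)$ be the number of $s\in[p]$ such that $\{s\}$ is a block of every $\sigma_k$. Then $$\sum_{\delta=(\sigma_1,\dots,\sigma_d):\ \sigma_k>\dot0\ \forall k,\ r(\delta)=r}\ \prod_{k=1}^d|\mu(\dot0,\sigma_k)|\ \le\ \binom{p}{r}\,\big((p-r)!\big)^d.$$
   Context: $[p]=\{1,\dots,p\}$; $\mathbb P_p$ is the lattice of partitions of $[p]$ ordered by refinement, $\dot0$ the partition into singletons, $\sigma>\dot0$ means $\sigma\ne\dot0$. $\mu$ is the Möbius function of $\mathbb P_p$: $\mu(\rho,\rho)=1$ and $\sum_{\rho\le\tau\le\sigma}\mu(\rho,\tau)=0$ for $\rho<\sigma$. *)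

From mathcomp Require Import all_boot all_order all_algebra.
Set Implicit Arguments. Unset Strict Implicit. Unset Printing Implicit Defensive.
Import GRing.Theory Num.Theory.

Definition setparts (p : nat) : {set {set {set 'I_p}}} :=
  [set P : {set {set 'I_p}} | partition P [set: 'I_p]].

Definition refines (p : nat) (sigma tau : {set {set 'I_p}}) : bool :=
  [forall B in sigma, [exists C in tau, B \subset C]].

Definition part0 (p : nat) : {set {set 'I_p}} := [set [set i] | i : 'I_p].

(* The recursion descends along strict chains of the lattice, which have
   length < p+1, so the fuel p.+1 is always sufficient. *)
Fixpoint mobius_aux (p n : nat) (rho sigma : {set {set 'I_p}}) : int :=
  if rho == sigma then 1%R
  else if refines rho sigma then
    match n with
    | 0 => 0%R
    | n'.+1 =>
        (- \sum_(tau in setparts p |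
                   [&& refines rho tau, refines tau sigma & tau != sigma])
             mobius_aux n' rho tau)%R
    end
  else 0%R.

Definition mobius (p : nat) (rho sigma : {set {set 'I_p}}) : int :=
  mobius_aux p.+1 rho sigma.

Definition rdelta (p d : nat) (delta : {ffun 'I_d -> {set {set 'I_p}}}) : nat :=
  #|[set s : 'I_p | [forall k, [set s] \in delta k]]|.

From mathcomp Require Import all_boot all_order all_algebra all_fingroup.
From mathcomp Require Import zify.
Set Implicit Arguments. Unset Strict Implicit. Unset Printing Implicit Defensive.
Import Order.TTheory GRing.Theory Num.Theory.

(* The Moebius function from the bottom of the partition lattice is a signed
   count of permutations: mu(0, sigma) is the sum of the signs of the
   permutations whose cycle partition is sigma.  This function satisfies the
   defining recursion because, for sigma > 0, the permutations stabilising
   every block of sigma are paired off with opposite signs by a transposition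
   inside a non-singleton block.  Hence |mu(0, sigma)| is at most the number
   of permutations with cycle partition sigma, and the left-hand side is at
   most the number of d-tuples of permutations of [p] with exactly r common
   fixed points: choose the r fixed points, then permute the rest freely. *)

Lemma card_sum_fibres (aT rT : finType) (g : aT -> rT) (P : pred rT) :
  #|[set x | P (g x)]| = \sum_(y | P y) #|[set x | g x == y]|.
Proof.
rewrite -sum1dep_card (partition_big g P) //=; apply: eq_bigr => y Py.
rewrite -sum1dep_card; apply: eq_bigl => x.
by case: (eqVneq (g x) y) => [->|]; rewrite ?Py ?andbF.
Qed.

Lemma prod_card_family (I J : finType) (A : I -> {pred J}) :
  \prod_i #|A i| = #|[set f : {ffun I -> J} | [forall i, f i \in A i]]|.
Proof.
rewrite -(eq_card (A := family A)) ?card_family ?foldrE ?big_map ?big_enum // => f.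
by rewrite inE; apply/familyP/forallP.
Qed.

Section SetPartitions.
Variable T : finType.
Implicit Types P Q : {set {set T}}.

Lemma mem_coverT P x : partition P [set: T] -> x \in cover P.
Proof. by move/cover_partition->; rewrite inE. Qed.

Lemma pblock_imset_partition P : partition P [set: T] -> pblock P @: [set: T] = P.
Proof.
move=> partP; have tiP := partition_trivIset partP.
apply/setP => B; apply/imsetP/idP => [[x _ ->]|PB].
  exact/pblock_mem/mem_coverT.
have /set0Pn[x Bx] := partition_neq0 partP PB.
by exists x; rewrite // (def_pblock tiP PB Bx).
Qed.

Lemma card_partitionT_le P : partition P [set: T] -> #|P| <= #|T|.
Proof.
by move=> partP; rewrite -(pblock_imset_partition partP) -cardsT leq_imset_card.
Qed.

Lemma partition_nontrivial_pblock P : partition P [set: T] ->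
  P != [set [set x] | x : T] -> [exists a, exists b, (a != b) && (b \in pblock P a)].
Proof.
move=> partP; apply: contraNT => /existsPn none.
have pblock1 a : pblock P a = [set a].
  apply/setP => b; rewrite inE; apply/idP/eqP => [Pab|->].
    by apply: contraNeq (none a) => nab; apply/existsP; exists b; rewrite eq_sym nab.
  by rewrite mem_pblock (mem_coverT _ partP).
apply/eqP; rewrite -(pblock_imset_partition partP).
by apply/setP => B; apply/imsetP/imsetP => -[a _ ->]; exists a; rewrite ?pblock1.
Qed.

Lemma card_partition_coarser_lt P Q :
    partition P [set: T] -> partition Q [set: T] ->
    (forall x, pblock P x \subset pblock Q x) -> P != Q ->
  #|Q| < #|P|.
Proof.
move=> partP partQ PQ neqPQ.
have [tiP tiQ] := (partition_trivIset partP, partition_trivIset partQ).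
pose coarsen (B : {set T}) := \bigcup_(x in B) pblock Q x.
have coarsenE x : coarsen (pblock P x) = pblock Q x.
  apply/setP => y; apply/bigcupP/idP => [[z Pxz]|Qxy].
    by rewrite -(same_pblock tiQ (subsetP (PQ x) z Pxz)).
  by exists x; rewrite // mem_pblock (mem_coverT _ partP).
have imQ : Q = coarsen @: P.
  rewrite -(pblock_imset_partition partP) -imset_comp.
  by rewrite -{1}(pblock_imset_partition partQ); apply: eq_imset => x /=.
rewrite ltn_neqAle imQ leq_imset_card andbT; apply: contra neqPQ => /eqP card_eq.
have /imset_injP inj : #|coarsen @: P| == #|P| by rewrite card_eq.
rewrite -(pblock_imset_partition partP) -(pblock_imset_partition partQ).
apply/eqP/eq_imset => x; apply/eqP; rewrite eqEsubset PQ.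
apply/subsetP => y Qxy; suff -> : pblock P x = pblock P y.
  by rewrite mem_pblock (mem_coverT _ partP).
apply: inj; rewrite ?coarsenE ?(same_pblock tiQ Qxy) //;
  exact/pblock_mem/mem_coverT.
Qed.

End SetPartitions.

Section PermutationCycles.
Variable T : finType.
Implicit Types (pi : {perm T}) (P : {set {set T}}).

Lemma porbit_fixed pi x : pi x = x -> porbit pi x = [set x].
Proof.
move=> pix; apply/setP => y; rewrite inE; apply/porbitP/eqP => [[i ->]|->].
  by elim: i => [|i IHi]; rewrite ?expg0 ?perm1 // expgSr permM IHi pix.
by exists 0; rewrite expg0 perm1.
Qed.

Lemma set1_porbitsE pi x : ([set x] \in porbits pi) = (pi x == x).
Proof.
apply/imsetP/eqP => [[y _ Ey]|pix]; last by exists x; rewrite ?porbit_fixed.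
have : x \in porbit pi y by rewrite -Ey set11.
rewrite -eq_porbit_mem -Ey => /eqP Ex.
by have := mem_porbit pi 1 x; rewrite expg1 Ex inE => /eqP.
Qed.

Lemma porbits1 : porbits (1 : {perm T}) = [set [set x] | x : T].
Proof. by apply: eq_imset => x; rewrite porbit_fixed ?perm1. Qed.

Lemma porbits_eq1 pi : (porbits pi == [set [set x] | x : T]) = (pi == 1%g).
Proof.
apply/eqP/eqP => [Epi|->]; last exact: porbits1.
apply/permP => x; rewrite perm1; apply/eqP.
by rewrite -set1_porbitsE Epi imset_f.
Qed.

Lemma porbits_partition pi : partition (porbits pi) [set: T].
Proof.
have -> : porbits pi = preim_partition (porbit pi) [set: T].
  apply/setP => B; apply/imsetP/imsetP => [] [x _ ->]; exists x => //;
    by apply/setP => y; rewrite !inE eq_porbit_mem porbit_sym.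
exact: preim_partitionP.
Qed.

Lemma pblock_porbits pi x : pblock (porbits pi) x = porbit pi x.
Proof.
apply: def_pblock; last exact: porbit_id.
  exact: partition_trivIset (porbits_partition pi).
exact: imset_f.
Qed.

Lemma porbit_sub_pblockE P pi : partition P [set: T] ->
  [forall x, porbit pi x \subset pblock P x] = [forall x, pi x \in pblock P x].
Proof.
move=> partP; have tiP := partition_trivIset partP.
apply/forallP/forallP => [sub x|stab x].
  by apply: subsetP (sub x) _ _; have := mem_porbit pi 1 x; rewrite expg1.
apply/subsetP => _ /porbitP[i ->]; elim: i => [|i IHi].
  by rewrite expg0 perm1 mem_pblock (mem_coverT _ partP).
by rewrite expgSr permM -(same_pblock tiP IHi).
Qed.

Section Signs.
Local Open Scope ring_scope.

Lemma sum_sign_tperm_invariant (A : pred {perm T}) a b : a != b ->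
  (forall pi, A (pi * tperm a b)%g = A pi) ->
  \sum_(pi | A pi) (-1) ^+ pi = 0 :> int.
Proof.
move=> neq_ab At; set S := (X in X = 0).
have : S = - S.
  rewrite {1}/S (reindex_inj (mulIg (tperm a b))) /= -sumrN.
  apply: eq_big => // pi _.
  by rewrite odd_permM odd_tperm neq_ab signr_addb expr1 mulrN1.
lia.
Qed.

Lemma sum_sign_pblock_stable P :
    partition P [set: T] -> P != [set [set x] | x : T] ->
  \sum_(pi : {perm T} | [forall x, pi x \in pblock P x]) (-1) ^+ pi = 0 :> int.
Proof.
move=> partP /(partition_nontrivial_pblock partP)/existsP[a /existsP[b]].
case/andP=> nab Pab; have tiP := partition_trivIset partP.
have Ptab : pblock P b = pblock P a by apply: same_pblock.
have mem_tperm x y : (tperm a b y \in pblock P x) = (y \in pblock P x).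
  rewrite -!eq_pblock ?(mem_coverT _ partP) //; congr (_ == _).
  by case: tpermP => [->|->|] //; rewrite Ptab.
apply: (sum_sign_tperm_invariant nab) => pi.
by apply: eq_forallb => x; rewrite permM mem_tperm.
Qed.

End Signs.

End PermutationCycles.

Section CommonFixedPoints.
Variables I T : finType.

Definition common_fix (f : {ffun I -> {perm T}}) : {set T} :=
  [set x | [forall i, f i x == x]].

Lemma card_common_fix_eq_le r :
  #|[set f : {ffun I -> {perm T}} | #|common_fix f| == r]|
    <= 'C(#|T|, r) * (#|T| - r)`! ^ #|I|.
Proof.
have fibre_le (S : {set T}) : #|S| = r ->
    #|[set f | common_fix f == S]| <= (#|T| - r)`! ^ #|I|.
  move=> <-; rewrite -[in #|T|](cardsC S) addKn -card_perm -card_ffun_on.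
  apply/subset_leq_card/subsetP => f; rewrite inE => /eqP fixS.
  apply/ffun_onP => i; apply/subsetP => x; rewrite !inE; apply: contraNN.
  by rewrite -fixS inE => /forallP.
rewrite (card_sum_fibres common_fix (fun S => #|S| == r)) -card_draws.
by rewrite -sum_nat_cond_const; apply: leq_sum => S /eqP; apply: fibre_le.
Qed.

End CommonFixedPoints.

Section MobiusFromBottom.
Variable p : nat.
Local Notation T := 'I_p.
Implicit Types s t : {set {set T}}.

Lemma setpartsE s : (s \in setparts p) = partition s [set: T].
Proof. by rewrite inE. Qed.

Lemma refines_refl s : refines s s.
Proof. by apply/forall_inP => B sB; apply/existsP; exists B; rewrite sB subxx. Qed.

Lemma refinesE t s : t \in setparts p -> s \in setparts p ->
  refines t s = [forall x, pblock t x \subset pblock s x].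
Proof.
rewrite !setpartsE => partt parts.
have [tit tis] := (partition_trivIset partt, partition_trivIset parts).
apply/forall_inP/forallP => [ref x|sub B tB].
  have tx : pblock t x \in t by exact/pblock_mem/mem_coverT.
  have /existsP[C /andP[sC tC]] := ref _ tx.
  rewrite (def_pblock tis sC (subsetP tC x _)) //.
  by rewrite mem_pblock (mem_coverT _ partt).
have /set0Pn[x Bx] := partition_neq0 partt tB.
apply/existsP; exists (pblock s x); rewrite pblock_mem ?(mem_coverT _ parts) //=.
by rewrite -(def_pblock tit tB Bx).
Qed.

Lemma refines_porbitsE (pi : {perm T}) s : s \in setparts p ->
  refines (porbits pi) s = [forall x, pi x \in pblock s x].
Proof.
move=> sP; have parts : partition s [set: T] by rewrite -setpartsE.
rewrite refinesE ?setpartsE ?porbits_partition // -(porbit_sub_pblockE _ parts).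
by apply: eq_forallb => x; rewrite pblock_porbits.
Qed.

Lemma part0_refines s : s \in setparts p -> refines (part0 p) s.
Proof.
move=> sP; rewrite -[part0 p]porbits1 refines_porbitsE //.
apply/forallP => x; rewrite perm1 mem_pblock.
by apply: mem_coverT; rewrite -setpartsE.
Qed.

Lemma card_setparts_le s : s \in setparts p -> #|s| <= p.
Proof. by rewrite setpartsE => /card_partitionT_le; rewrite card_ord. Qed.

Lemma card_setparts_refines_lt t s : t \in setparts p -> s \in setparts p ->
  refines t s -> t != s -> #|s| < #|t|.
Proof.
move=> tP sP; rewrite refinesE // => /forallP sub.
by apply: card_partition_coarser_lt; rewrite -?setpartsE.
Qed.

Section SignedCycleCount.
Local Open Scope ring_scope.

Definition signed_cycle_count s : int :=
  \sum_(pi : {perm T} | porbits pi == s) (-1) ^+ pi.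

Lemma signed_cycle_count_part0 : signed_cycle_count (part0 p) = 1.
Proof.
rewrite /signed_cycle_count (eq_bigl (pred1 1%g)) => [|pi]; last exact: porbits_eq1.
by rewrite big_pred1_eq odd_perm1.
Qed.

Lemma sum_signed_cycle_count_refines s : s \in setparts p -> s != part0 p ->
  \sum_(t in setparts p | refines t s) signed_cycle_count t = 0.
Proof.
move=> sP ns0; have parts : partition s [set: T] by rewrite -setpartsE.
rewrite -[RHS](sum_sign_pblock_stable parts ns0).
rewrite -(eq_bigl _ _ (fun pi => refines_porbitsE pi sP)).
rewrite (partition_big porbits (fun t => (t \in setparts p) && refines t s)) /=.
  apply: eq_bigr => t /andP[_ ts]; apply: eq_bigl => pi.
  by case: (eqVneq (porbits pi) t) => [->|]; rewrite ?ts ?andbF.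
by move=> pi ->; rewrite setpartsE porbits_partition.
Qed.

(* Strict refinement increases the number of blocks, which never exceeds [p]. *)
Lemma mobius_aux_part0E n s : s \in setparts p -> (p - #|s| < n)%N ->
  mobius_aux n (part0 p) s = signed_cycle_count s.
Proof.
elim: n s => [//|n IHn] s sP fuel /=.
have [<-|ns0] := eqVneq (part0 p) s; first by rewrite signed_cycle_count_part0.
have := sum_signed_cycle_count_refines sP; rewrite eq_sym => /(_ ns0).
rewrite (bigD1 s) ?sP ?refines_refl //= => /eqP; rewrite addr_eq0 => /eqP ->.
rewrite part0_refines //; congr (- _).
apply: eq_big => [t|t /andP[tP /and3P[_ ts nts]]].
  by rewrite andbA; case: (boolP (t \in setparts p)) => // /part0_refines ->.
apply: IHn => //; have := card_setparts_refines_lt tP sP ts nts.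
by have := card_setparts_le tP; lia.
Qed.

Lemma mobius_part0E s : s \in setparts p -> mobius (part0 p) s = signed_cycle_count s.
Proof. by move=> sP; apply: mobius_aux_part0E => //; lia. Qed.

Lemma abs_mobius_part0_le s : s \in setparts p ->
  (`|mobius (part0 p) s| <= #|[set pi : {perm T} | porbits pi == s]|)%N.
Proof.
move=> sP; rewrite mobius_part0E // -lez_nat abszE -sum1dep_card.
rewrite -natz natr_sum.
apply: le_trans (ler_norm_sum _ _ _) _; apply: ler_sum => pi _.
by rewrite normrX normrN1 expr1n.
Qed.

End SignedCycleCount.

End MobiusFromBottom.

Lemma sum_prod_card_porbits p d r :
  \sum_(delta : {ffun 'I_d -> {set {set 'I_p}}} | rdelta delta == r)
     \prod_(k < d) #|[set pi : {perm 'I_p} | porbits pi == delta k]|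
  = #|[set f : {ffun 'I_d -> {perm 'I_p}} | #|common_fix f| == r]|.
Proof.
pose cycles (f : {ffun 'I_d -> {perm 'I_p}}) := [ffun k => porbits (f k)].
have rdelta_cycles f : rdelta (cycles f) = #|common_fix f|.
  apply: eq_card => x; rewrite !inE; apply: eq_forallb => k.
  by rewrite ffunE set1_porbitsE.
rewrite (eq_card (B := [set f | rdelta (cycles f) == r])) => [|f]; last first.
  by rewrite !inE rdelta_cycles.
rewrite (card_sum_fibres cycles (fun delta => rdelta delta == r)).
apply: eq_bigr => delta _.
rewrite prod_card_family; apply: eq_card => f; rewrite !inE.
apply/forallP/eqP => [fdelta|<- k]; last by rewrite inE ffunE.
by apply/ffunP => k; rewrite ffunE; apply/eqP; have := fdelta k; rewrite inE.
Qed.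

Theorem mainTheorem7 (p d r : nat) (hp : 1 <= p) (hd : 1 <= d) (hr : r <= p) :
  \sum_(delta : {ffun 'I_d -> {set {set 'I_p}}} |
          [forall k, (delta k \in setparts p) && (delta k != part0 p)]
          && (rdelta delta == r))
     \prod_(k < d) `|mobius (part0 p) (delta k)|%N
  <= 'C(p, r) * ((p - r)`!) ^ d.
Proof.
pose nontrivial (delta : {ffun 'I_d -> {set {set 'I_p}}}) :=
  [forall k, (delta k \in setparts p) && (delta k != part0 p)].
apply: leq_trans (_ : \sum_(delta | rdelta delta == r)
    \prod_(k < d) #|[set pi : {perm 'I_p} | porbits pi == delta k]| <= _).
  rewrite [leqRHS](bigID nontrivial) /=; apply: leq_trans (leq_addr _ _).
  rewrite (eq_bigl _ _ (fun delta => andbC _ _)); apply: leq_sum => delta.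
  move=> /andP[_ /forallP delta_parts]; apply: leq_prod => k _.
  by apply: abs_mobius_part0_le; case/andP: (delta_parts k).
rewrite sum_prod_card_porbits.
by have := @card_common_fix_eq_le 'I_d 'I_p r; rewrite !card_ord.
Qed.
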